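(* Let \(\mathcal{I}\) be an instance of 3-SAT and let \(G(\mathcal{I})\) and \(T(\mathcal{I})\) be the graph and spanning tree constructed below. If \(\mathcal{I}\) admits a satisfying assignment, then \(T(\mathcal{I})\) is the \(\mathcal{F}\)-tree of some LBFS ordering of \(G(\mathcal{I})\).
   Context: Let \(\mathcal{I}\) have variables \(x_1,\dots,x_k\) and clauses \(C_1,\dots,C_l\), each a disjunction of three literals. \(G(\mathcal{I})\) has vertices: literal vertices \(X=\{x_1,\dots,x_k,\overline{x_1},\dots,\overline{x_k}\}\); for each clause \(C_i\) three vertices \(a_i,c_i,t_i\); and four vertices \(r,p,q,u\). Edges: any two vertices of \(X\) are adjacent except the pairs \(x_j\overline{x_j}\); each \(\{a_i,c_i,t_i\}\) is a triangle; \(c_i\) is adjacent to the literal vertices of the literals occurring in \(C_i\); \(r\) is adjacent to every vertex except \(u\) and the \(t_i\); \(u\) is adjacent to every vertex except \(r\) and the \(t_i\); \(p\) is adjacent to every vertex of \(X\) and to \(q\); \(q\) is adjacent to every vertex of \(X\) and to every \(a_i\); there are no other edges. \(T(\mathcal{I})\) is the spanning tree consisting of all edges of \(G(\mathcal{I})\) incident to \(r\), the edge \(up\), and the edges \(c_it_i\) for \(i=1,\dots,l\). An LBFS ordering (with \(n\) the number of vertices) is produced by starting with label \((n)\) on a start vertex, empty labels elsewhere, and for \(j=1,\dots,n\) picking an unnumbered vertex of lexicographically largest label as \(v_j\) and appending \(n-j\) to the labels of its unnumbered neighbors (ties arbitrary). The \(\mathcal{F}\)-tree of an ordering \((v_1,\dots,v_n)\)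 has, for each \(v\ne v_1\), an edge from \(v\) to its leftmost neighbor in the ordering. *)

From HB Require Import structures.
From mathcomp Require Import all_boot.
Set Implicit Arguments. Unset Strict Implicit. Unset Printing Implicit Defensive.

Section Generic.
Variable V : finType.
Variable adj : rel V.

Fixpoint lex_le (s t : seq nat) : bool :=
  match s, t with
  | [::], _ => true
  | _ :: _, [::] => false
  | x :: s', y :: t' => (x < y) || ((x == y) && lex_le s' t')
  end.

(* label of v just before step j+1 (0-indexed step j, i.e. when the vertex
   at position j of s is chosen), for LBFS started at x0:
   initial label (n) on x0, then for each already numbered vertex v_{i+1}
   (1-indexed position i+1 <= j) adjacent to v, the number n-(i+1). *)
Definition lbfs_label (x0 : V) (s : seq V) (j : nat) (v : V) : seq nat :=
  (if v == x0 then [:: #|V|] else [::]) ++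
  [seq #|V| - i.+1 | i <- iota 0 j & adj (nth x0 s i) v].

Definition is_LBFS (s : seq V) : Prop :=
  perm_eq s (enum V) /\
  exists x0 : V, forall j, j < size s ->
    forall v, v \notin take j s ->
      lex_le (lbfs_label x0 s j v) (lbfs_label x0 s j (nth x0 s j)).

Definition leftmost_nb (s : seq V) (v y : V) : bool :=
  adj v y && [forall z, adj v z ==> (index y s <= index z s)].

Definition ftree_edge (s : seq V) (x y : V) : bool :=
  ((0 < index x s) && leftmost_nb s x y) || ((0 < index y s) && leftmost_nb s y x).

Definition is_Ftree (s : seq V) (t : rel V) : Prop :=
  forall x y, t x y = ftree_edge s x y.
End Generic.

(* An instance: k variables, l clauses; clause i has three literals
   cl i 0, cl i 1, cl i 2, a literal being (j, b) with b = true for x_j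
   and b = false for the negation of x_j. *)
Definition lit (k : nat) := ('I_k * bool)%type.

Definition satisfiable (k l : nat) (cl : 'I_l -> 'I_3 -> lit k) : Prop :=
  exists a : 'I_k -> bool, forall i : 'I_l, exists m : 'I_3, a (cl i m).1 = (cl i m).2.

Inductive vtx (k l : nat) :=
| VLit of 'I_k & bool
| VA of 'I_l | VC of 'I_l | VT of 'I_l
| VR | VP | VQ | VU.
Arguments VLit {k l}. Arguments VA {k l}. Arguments VC {k l}. Arguments VT {k l}.
Arguments VR {k l}. Arguments VP {k l}. Arguments VQ {k l}. Arguments VU {k l}.

Section Vtx.
Variables k l : nat.
Definition vtx_enc (x : vtx k l) : (('I_k * bool) + ('I_l * 'I_3)) + 'I_4 :=
  match x with
  | VLit j b => inl (inl (j, b))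
  | VA i => inl (inr (i, inord 0))
  | VC i => inl (inr (i, inord 1))
  | VT i => inl (inr (i, inord 2))
  | VR => inr (inord 0) | VP => inr (inord 1) | VQ => inr (inord 2) | VU => inr (inord 3)
  end.
Definition vtx_dec (y : (('I_k * bool) + ('I_l * 'I_3)) + 'I_4) : vtx k l :=
  match y with
  | inl (inl (j, b)) => VLit j b
  | inl (inr (i, m)) => if val m == 0 then VA i else if val m == 1 then VC i else VT i
  | inr m => if val m == 0 then VR else if val m == 1 then VP
             else if val m == 2 then VQ else VU
  end.
Lemma vtx_encK : cancel vtx_enc vtx_dec.
Proof. by case=> //= *; rewrite inordK. Qed.
HB.instance Definition _ := Finite.copy (vtx k l) (can_type vtx_encK).
End Vtx.

Section Construction.
Variables (k l : nat) (cl : 'I_l -> 'I_3 -> lit k).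

Definition in_clause (i : 'I_l) (j : 'I_k) (b : bool) : bool :=
  [exists m : 'I_3, cl i m == (j, b)].

(* one orientation of each edge of G(I) *)
Definition gedge0 (x y : vtx k l) : bool :=
  match x, y with
  | VLit j _, VLit j' _ => j != j'
  | VA i, VC i' => i == i'
  | VA i, VT i' => i == i'
  | VC i, VT i' => i == i'
  | VC i, VLit j b => in_clause i j b
  | VR, VU | VR, VT _ | VR, VR => false
  | VR, _ => true
  | VU, VR | VU, VT _ | VU, VU => false
  | VU, _ => true
  | VP, VLit _ _ => true
  | VP, VQ => true
  | VQ, VLit _ _ => true
  | VQ, VA _ => true
  | _, _ => false
  end.

Definition Gadj (x y : vtx k l) : bool := gedge0 x y || gedge0 y x.

Definition Tedge (x y : vtx k l) : bool :=
  (Gadj x y && ((x == VR) || (y == VR)))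
  || ((x == VU) && (y == VP)) || ((x == VP) && (y == VU))
  || [exists i : 'I_l, ((x == VC i) && (y == VT i)) || ((x == VT i) && (y == VC i))].
End Construction.

(* Order the vertices of G(I) as
     r, p, the literals true under a satisfying assignment (increasing variable), q,
     the false literals (decreasing variable), the c_i, the a_i, u, the t_i,
   the three clause blocks following one order that sorts the c_i by decreasing label.
   Every vertex other than r, u and the t_i is adjacent to r, the first neighbour of u
   is p and that of t_i is c_i: the F-tree of this ordering is T(I).
   Apart from pairs of c-vertices, which the sort takes care of, the ordering satisfies
   the four-point condition of LBFS: if w < x < v, wv is an edge and wx is not, then some
   w' < w is adjacent to x but not to v.  The only case that needs the assignment is
   x = c_i, v = a_j, w = q, where w' is a true literal of the clause C_i. *)

From mathcomp Require Import all_boot zify.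
Set Implicit Arguments. Unset Strict Implicit. Unset Printing Implicit Defensive.

Lemma lex_le_refl : reflexive lex_le.
Proof. by elim=> //= x s IH; rewrite eqxx IH orbT. Qed.

Lemma lex_le_total : total lex_le.
Proof. by elim=> [|x s IH] [|y t] //=; case: (ltngtP x y) => //= ->; rewrite eqxx IH. Qed.

Lemma lex_le_trans : transitive lex_le.
Proof.
move=> t s; elim: s t => [|x s IH] [|y t] [|z u] //=.
case/orP=> [ltyx|/andP[/eqP<- le_ts]]; case/orP=> [ltxz|/andP[/eqP<- le_su]].
- by rewrite (ltn_trans ltyx ltxz).
- by rewrite ltyx.
- by rewrite ltxz.
- by rewrite eqxx (IH _ _ le_ts le_su) orbT.
Qed.

(* Both sides decrease, so the first index where [A] and [B] disagree decides. *)
Lemma lex_le_filter_iota N (A B : pred nat) m n : m + n <= N ->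
  (forall i, m <= i < m + n -> A i -> ~~ B i ->
     exists2 i', m <= i' < i & B i' && ~~ A i') ->
  lex_le [seq N - i.+1 | i <- iota m n & A i] [seq N - i.+1 | i <- iota m n & B i].
Proof.
elim: n m => [|n IH] m le_N witness //=.
have IHS : A m = B m -> lex_le [seq N - i.+1 | i <- iota m.+1 n & A i]
                                [seq N - i.+1 | i <- iota m.+1 n & B i].
  move=> eq_AB; apply: IH => [|i lt_i Ai nBi]; first lia.
  have [|i' /andP[le_mi' lt_i'i] /andP[Bi' nAi']] := witness i _ Ai nBi; first lia.
  exists i'; last by rewrite Bi'.
  rewrite lt_i'i andbT ltn_neqAle le_mi' andbT.
  by apply/eqP => eq_mi'; move: Bi' nAi'; rewrite -eq_mi' -eq_AB => ->.
case Am: (A m); case Bm: (B m) => /=.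
- by rewrite ltnn eqxx IHS ?Am.
- by have [|i' /andP[le_mi' lt_i'm] _] := witness m _ Am (negbT Bm); lia.
- case E: [seq N - i.+1 | i <- iota m.+1 n & A i] => [|y ys] //=.
  have /mapP[i] : y \in [seq N - i.+1 | i <- iota m.+1 n & A i] by rewrite E mem_head.
  by rewrite mem_filter mem_iota => /andP[_ /andP[lt_mi lt_i]] ->; lia.
- by rewrite IHS ?Am ?Bm.
Qed.

Section Orderings.
Variables (V : finType) (adj : rel V).

Lemma lbfs_label_le (x0 : V) (s : seq V) j v :
  j <= #|V| -> v != x0 -> nth x0 s j != x0 ->
  (forall i, i < j -> adj (nth x0 s i) v -> ~~ adj (nth x0 s i) (nth x0 s j) ->
     exists2 i', i' < i & adj (nth x0 s i') (nth x0 s j) && ~~ adj (nth x0 s i') v) ->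
  lex_le (lbfs_label adj x0 s j v) (lbfs_label adj x0 s j (nth x0 s j)).
Proof.
move=> le_jV nv nx four_point; rewrite /lbfs_label (negbTE nv) (negbTE nx).
exact: lex_le_filter_iota.
Qed.

Lemma index_sort_enum (f : V -> nat) : injective f -> (forall x, f x < #|V|) ->
  forall x, index x (sort (relpre f leq) (enum V)) = f x.
Proof.
move=> f_inj f_lt x; set s := sort _ _.
have uniq_fs : uniq (map f s) by rewrite map_inj_uniq // sort_uniq enum_uniq.
have fs : map f s = iota 0 #|V|.
  apply: (irr_sorted_eq ltn_trans ltnn); last 1 first.
  - apply: (uniq_min_size uniq_fs _ _).2 => [_ /mapP[y _ ->]|].
      by rewrite mem_iota f_lt.
    by rewrite size_iota size_map size_sort -cardT.
  - by rewrite ltn_sorted_uniq_leq uniq_fs sorted_map (sort_sorted (fun y z => leq_total (f y) (f z))).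
  - exact: iota_ltn_sorted.
rewrite -(index_map f_inj) fs -{1}[f x]add0n -(nth_iota 0 0 (f_lt x)).
by rewrite index_uniq ?size_iota ?iota_uniq.
Qed.

Variables (s : seq V) (parent : V -> V).
Hypothesis mem_s : forall x, x \in s.
Hypothesis parent_adj : forall x, 0 < index x s -> adj x (parent x).
Hypothesis parent_first : forall x z, 0 < index x s -> adj x z -> index (parent x) s <= index z s.

Lemma leftmost_nb_parent x y : 0 < index x s -> leftmost_nb adj s x y = (y == parent x).
Proof.
move=> x_gt0; apply/andP/eqP => [[xy /forallP/(_ (parent x))]|->].
  rewrite parent_adj // => /= le_y; apply: (index_inj x (mem_s y) (mem_s _)).
  by apply/eqP; rewrite eqn_leq le_y parent_first.
by split; [exact: parent_adj | apply/forallP => z; apply/implyP; exact: parent_first].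
Qed.

Lemma ftree_edge_parent x y : ftree_edge adj s x y =
  ((0 < index x s) && (y == parent x)) || ((0 < index y s) && (x == parent y)).
Proof.
rewrite /ftree_edge; case: (posnP (index x s)) => [|/leftmost_nb_parent->] //=;
  by case: (posnP (index y s)) => [|/leftmost_nb_parent->].
Qed.
End Orderings.

Lemma card_vtx k l : #|{: vtx k l}| = 2 * k + 3 * l + 4.
Proof.
have vtx_decK : cancel (@vtx_dec k l) (@vtx_enc k l).
  case=> [[[j b]|[i [[|[|[|m]]] lt_m]]]|[[|[|[|[|m]]]] lt_m]] //=;
    by congr (inl (inr (_, _))) || congr inr; apply: val_inj; rewrite /= inordK.
rewrite (bij_eq_card (f := @vtx_enc k l)); last by exists (@vtx_dec k l); [exact: vtx_encK|].
by rewrite !card_sum !card_prod !card_ord card_bool; lia.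
Qed.

Lemma vtx_eqE k l (x y : vtx k l) : (x == y) =
  match x, y with
  | VLit j b, VLit j' b' => (j == j') && (b == b')
  | VA i, VA i' | VC i, VC i' | VT i, VT i' => i == i'
  | VR, VR | VP, VP | VQ, VQ | VU, VU => true
  | _, _ => false
  end.
Proof.
apply/eqP/idP => [<-|]; first by case: x => *; rewrite ?eqxx.
by case: x => [j b|i|i|i| | | | ]; case: y => //=;
  first [by move=> ? ? /andP[/eqP-> /eqP->] | by move=> ? /eqP->].
Qed.

Section Construction.
Variables (k l : nat) (cl : 'I_l -> 'I_3 -> lit k) (a : 'I_k -> bool).
Local Notation V := (vtx k l).
Local Notation adj := (Gadj cl).

Definition lit_pos (L : lit k) : nat := if L.2 == a L.1 then 2 + L.1 else 2 * k + 2 - L.1.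

(* The label of c_i once r, p, the literals and q (positions 0 .. 2k+2) are numbered. *)
Definition clause_key (i : 'I_l) : seq nat :=
  [seq #|{: V}| - p.+1 | p <- iota 0 (2 * k + 3) & (p == 0) || [exists m, lit_pos (cl i m) == p]].

Definition clause_order : seq 'I_l :=
  sort (fun i i' => lex_le (clause_key i') (clause_key i)) (enum 'I_l).

Definition rk (i : 'I_l) : nat := index i clause_order.

Definition pos (x : V) : nat :=
  match x with
  | VR => 0
  | VP => 1
  | VLit j b => lit_pos (j, b)
  | VQ => k + 2
  | VC i => 2 * k + 3 + rk i
  | VA i => 2 * k + 3 + l + rk i
  | VU => 2 * k + 3 + 2 * l
  | VT i => 2 * k + 4 + 2 * l + rk i
  end.

Definition order : seq V := sort (relpre pos leq) (enum {: V}).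

Lemma mem_clause_order i : i \in clause_order.
Proof. by rewrite mem_sort mem_enum. Qed.

Lemma rk_lt i : rk i < l.
Proof. by have := mem_clause_order i; rewrite -index_mem size_sort size_enum_ord. Qed.

Lemma rk_inj : injective rk.
Proof. by move=> i i' /(congr1 (nth i clause_order)); rewrite !nth_index ?mem_clause_order. Qed.

Lemma lit_pos_inj : injective lit_pos.
Proof.
move=> [j b] [j' b'] eq_pos; have lt_j := ltn_ord j; have lt_j' := ltn_ord j'.
have eq_j : j = j'.
  by apply: val_inj; move: eq_pos; rewrite /lit_pos /=; do 2 case: ifP => _; lia.
subst j'; congr pair; move: eq_pos; rewrite /lit_pos /=.
by case: b b' (a j) => [] [] [] //=; lia.
Qed.

Lemma lit_pos_true j : lit_pos (j, a j) = 2 + j.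
Proof. by rewrite /lit_pos /= eqxx. Qed.

Lemma lit_pos_false j : lit_pos (j, ~~ a j) = 2 * k + 2 - j.
Proof. by rewrite /lit_pos /=; case: (a j). Qed.

Lemma ord_eqE n (i j : 'I_n) : (i == j) = (nat_of_ord i == nat_of_ord j).
Proof. by []. Qed.

Lemma rkE (i i' : 'I_l) : (i == i') = (rk i == rk i').
Proof. by rewrite (inj_eq rk_inj). Qed.

Ltac ord_bounds :=
  repeat match goal with
  | i : 'I_l |- _ => lazymatch goal with _ : is_true (rk i < l) |- _ => fail | _ => have ? := rk_lt i end
  | j : 'I_k |- _ => lazymatch goal with _ : is_true (nat_of_ord j < k) |- _ => fail | _ => have ? := ltn_ord j end
  end.

(* [lit_pos_true]/[lit_pos_false] go first: the [ifP] split below forgets its condition. *)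
Ltac pos_arith :=
  rewrite /= ?lit_pos_true ?lit_pos_false /lit_pos /= ?rkE ?ord_eqE; ord_bounds; repeat case: ifP => _; lia.

Lemma pos_inj : injective pos.
Proof.
move=> x y; case: x => [j b|i|i|i| | | | ]; case: y => [j' b'|i'|i'|i'| | | | ] //= eq_pos;
  try by [case: (lit_pos_inj eq_pos) => -> -> | rewrite (@rk_inj i i') //; lia];
  exfalso; move: eq_pos; pos_arith.
Qed.

Lemma pos_lt_card x : pos x < #|{: V}|.
Proof. by rewrite card_vtx; case: x => *; pos_arith. Qed.

Lemma index_order x : index x order = pos x.
Proof. exact: index_sort_enum pos_inj pos_lt_card x. Qed.

Lemma mem_order x : x \in order.
Proof. by rewrite mem_sort mem_enum. Qed.

Lemma nth_order_pos x : nth VR order (pos x) = x.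
Proof. by rewrite -index_order nth_index ?mem_order. Qed.

Lemma pos_onto p : p < #|{: V}| -> exists x, p = pos x.
Proof.
move=> lt_p; exists (nth VR order p).
by rewrite -index_order index_uniq ?sort_uniq ?enum_uniq // size_sort -cardT.
Qed.

Lemma pos_eq0 x : (pos x == 0) = (x == VR).
Proof. by rewrite -(inj_eq pos_inj). Qed.

Definition four_point (x v : V) : Prop :=
  forall w, pos w < pos x -> adj w v -> ~~ adj w x ->
  exists2 w', pos w' < pos w & adj w' x && ~~ adj w' v.

Lemma four_point_earlier_adj x v : (forall w, pos w < pos x -> adj w x) -> four_point x v.
Proof. by move=> adj_x w /adj_x ->. Qed.

Lemma four_point_via_r x v : adj VR x -> ~~ adj VR v -> four_point x v.
Proof.
move=> rx nrv w _ wv _; exists VR; last by rewrite rx.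
by rewrite lt0n pos_eq0; apply: contraNneq nrv => <-.
Qed.

Lemma four_point_via_p x v : adj VR x -> adj VP x -> ~~ adj VP v -> four_point x v.
Proof.
move=> rx px npv w _ wv nwx; exists VP; last by rewrite px.
have : w != VR by apply: contraNneq nwx => ->.
have : w != VP by apply: contraNneq npv => <-.
by rewrite -!(inj_eq pos_inj) /=; lia.
Qed.

Ltac adj_arith := rewrite /Gadj; pos_arith.

Lemma four_point_prefix x v : x != VR -> pos x <= k + 2 -> four_point x v.
Proof.
move=> nx lt_x; apply: four_point_earlier_adj => w; move: nx lt_x.
by rewrite vtx_eqE; case: x => [j b|i|i|i| | | | ]; case: w => [j' b'|i'|i'|i'| | | | ] //; adj_arith.
Qed.

Lemma four_point_false_lit m v :
  pos (VLit m (~~ a m)) < pos v -> four_point (VLit m (~~ a m)) v.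
Proof.
have lt_m := ltn_ord m.
case: v => [j b|i|i|i| | | | ] /=; rewrite lit_pos_false => lt_xv; first 1 last.
- by apply: four_point_via_p; adj_arith.
- by apply: four_point_via_p; adj_arith.
- by apply: four_point_via_r; adj_arith.
- by exfalso; lia.
- by exfalso; lia.
- by exfalso; lia.
- by apply: four_point_via_r; adj_arith.
have lt_j := ltn_ord j.
case: (eqVneq b (a j)) lt_xv => [->|nb]; first by rewrite lit_pos_true; lia.
have -> : b = ~~ a j by case: b (a j) nb => [] [].
rewrite lit_pos_false => lt_jm w lt_w wv nwx; exists (VLit j (a j)); last by adj_arith.
by move: lt_w wv nwx; case: w => [j' b'|i'|i'|i'| | | | ]; adj_arith.
Qed.

Definition is_clause_vtx (x : V) : bool := if x is VC _ then true else false.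

Hypothesis a_sat : forall i, exists m : 'I_3, a (cl i m).1 = (cl i m).2.

Lemma four_point_clause i v :
  pos (VC i) < pos v -> ~~ is_clause_vtx v -> four_point (VC i) v.
Proof.
case: v => [j b|i'|i'|i'| | | | ] //= lt_xv _; try by exfalso; move: lt_xv; pos_arith.
- have [m sat_m] := a_sat i.
  have lit_adj : adj (VLit (cl i m).1 (cl i m).2) (VC i).
    by rewrite /Gadj /=; apply/existsP; exists m; rewrite -surjective_pairing.
  move: (cl i m) sat_m lit_adj => [j b] /= <- lit_adj w lt_w wv nwx.
  exists (VLit j (a j)); last by rewrite lit_adj.
  by move: lt_w wv nwx; case: w => [j' b'|i''|i''|i''| | | | ]; adj_arith.
- by apply: four_point_via_r; adj_arith.
- by apply: four_point_via_r; adj_arith.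
Qed.

Lemma four_point_a i v : pos (VA i) < pos v -> four_point (VA i) v.
Proof.
case: v => [j b|i'|i'|i'| | | | ] //= lt_xv; try by exfalso; move: lt_xv; pos_arith.
- move=> w lt_w wv nwx; exists (VC i); last by adj_arith.
  by move: lt_w wv nwx; case: w => [j' b'|i''|i''|i''| | | | ]; adj_arith.
- by apply: four_point_via_r; adj_arith.
- by apply: four_point_via_r; adj_arith.
Qed.

Lemma four_point_u v : pos VU < pos v -> four_point VU v.
Proof.
case: v => [j b|i|i|i| | | | ] lt_uv w; try by exfalso; move: lt_uv; pos_arith.
by case: w => [j' b'|i'|i'|i'| | | | ] //; adj_arith.
Qed.

Lemma four_point_t i v : pos (VT i) < pos v -> four_point (VT i) v.
Proof.
case: v => [j b|i'|i'|i'| | | | ] //= lt_xv; try by exfalso; move: lt_xv; pos_arith.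
move=> w lt_w wv nwx; exists (VC i); last by adj_arith.
by move: lt_w wv nwx; case: w => [j' b'|i''|i''|i''| | | | ]; adj_arith.
Qed.

Lemma four_point_order x v : x != VR -> pos x < pos v ->
  ~~ (is_clause_vtx x && is_clause_vtx v) -> four_point x v.
Proof.
case: x => [j b|i|i|i| | | | ] nx lt_xv nc //.
- case: (eqVneq b (a j)) => [eq_b|nb].
    by apply: four_point_prefix => //; rewrite /= eq_b lit_pos_true; have := ltn_ord j; lia.
  have eq_b : b = ~~ a j by case: b (a j) nb {nx nc lt_xv} => [] [].
  by rewrite eq_b in lt_xv *; exact: four_point_false_lit.
- exact: four_point_a lt_xv.
- exact: four_point_clause lt_xv nc.
- exact: four_point_t lt_xv.
- by apply: four_point_prefix nx _; rewrite /=; lia.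
- by apply: four_point_prefix nx _; rewrite /=; lia.
- exact: four_point_u lt_xv.
Qed.

Lemma adj_prefix_clause w i : pos w < 2 * k + 3 ->
  adj w (VC i) = (pos w == 0) || [exists m, lit_pos (cl i m) == pos w].
Proof.
have no_lit p : p \in [:: 1; k + 2] -> ~~ [exists m, lit_pos (cl i m) == p].
  by rewrite !inE => p_nonlit; apply/existsP => -[m]; case: (cl i m) p_nonlit => j b; pos_arith.
case: w => [j b|i'|i'|i'| | | | ] /= lt_w; try by exfalso; move: lt_w; pos_arith.
- have -> : (lit_pos (j, b) == 0) = false by pos_arith.
  by apply: eq_existsb => m; rewrite (inj_eq lit_pos_inj).
- by rewrite /Gadj.
- by rewrite (negbTE (no_lit 1 _)) ?inE ?eqxx.
- by rewrite (negbTE (no_lit (k + 2) _)) ?inE ?eqxx ?orbT // addn2.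
Qed.

Lemma lbfs_label_clause i i' : lbfs_label adj VR order (pos (VC i)) (VC i') = clause_key i'.
Proof.
have lt_card p : p < 2 * k + 3 + rk i -> p < #|{: V}|.
  by rewrite card_vtx; have := rk_lt i; lia.
rewrite /lbfs_label vtx_eqE cat0s /= iotaD filter_cat map_cat.
have -> : [seq p <- iota (0 + (2 * k + 3)) (rk i) | adj (nth VR order p) (VC i')] = [::].
  apply/eqP/negbNE; rewrite -has_filter; apply/hasPn => p; rewrite mem_iota => range.
  have [|w eq_p] := pos_onto (lt_card p _); first by lia.
  by move: range; rewrite eq_p nth_order_pos; case: w {eq_p} => [? ?|?|?|?| | | | ]; adj_arith.
rewrite cats0; congr map; apply: eq_in_filter => p; rewrite mem_iota => /andP[_ lt_p].
have [|w eq_p] := pos_onto (lt_card p _); first by lia.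
by rewrite eq_p nth_order_pos adj_prefix_clause // -eq_p.
Qed.

Lemma clause_key_sorted i i' : rk i <= rk i' -> lex_le (clause_key i') (clause_key i).
Proof.
move=> le_rk; pose leT i i' := lex_le (clause_key i') (clause_key i).
have leT_trans : transitive leT by move=> ? ? ? /[swap]; exact: lex_le_trans.
have leT_total : total leT by move=> ? ?; exact: lex_le_total.
have := sorted_leq_nth leT_trans (fun _ => lex_le_refl _) i (sort_sorted leT_total (enum 'I_l)).
rewrite -/clause_order => /(_ (rk i) (rk i')).
by rewrite !inE size_sort size_enum_ord !rk_lt /rk !nth_index ?mem_clause_order //; apply.
Qed.

Lemma order_is_LBFS : is_LBFS adj order.
Proof.
split; first by rewrite perm_sort.
exists VR => j; rewrite size_sort -cardT => /pos_onto[x ->] v.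
rewrite nth_order_pos in_take ?mem_order // index_order -leqNgt => le_xv.
have [x0|x_gt0] := posnP (pos x).
  by rewrite /lbfs_label -!pos_eq0 x0; case: ifP => _; [exact: lex_le_refl|].
have nx : x != VR by rewrite -pos_eq0 -lt0n.
have [->|nvx] := eqVneq v x; first exact: lex_le_refl.
have lt_xv : pos x < pos v by rewrite ltn_neqAle le_xv (inj_eq pos_inj) eq_sym nvx.
have [|nc] := boolP (is_clause_vtx x && is_clause_vtx v).
  case: x {x_gt0 nx nvx le_xv} lt_xv => // i; case: v => // i' /= lt_xv _.
  by rewrite !lbfs_label_clause clause_key_sorted //; lia.
rewrite -{3}(nth_order_pos x); apply: lbfs_label_le; rewrite ?nth_order_pos //.
- exact: ltnW (pos_lt_card x).
- by rewrite -(inj_eq pos_inj) /=; lia.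
move=> i lt_i; have [|w eq_i] := pos_onto (_ : i < #|{: V}|).
  by have := pos_lt_card x; lia.
rewrite eq_i !nth_order_pos in lt_i * => wv nwx.
have [w' lt_w'] := four_point_order nx lt_xv nc lt_i wv nwx.
by exists (pos w'); rewrite ?nth_order_pos.
Qed.

Definition parent (x : V) : V := match x with VU => VP | VT i => VC i | _ => VR end.

Lemma parent_adj x : x != VR -> adj x (parent x).
Proof. by rewrite vtx_eqE; case: x => *; rewrite /Gadj //= eqxx. Qed.

Lemma parent_first x z : adj x z -> pos (parent x) <= pos z.
Proof. by case: x => [j b|i|i|i| | | | ]; case: z => [? ?|?|?|?| | | | ]; adj_arith. Qed.

Lemma clause_edgeE (x y : V) :
  [exists i : 'I_l, ((x == VC i) && (y == VT i)) || ((x == VT i) && (y == VC i))] =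
  match x, y with VC i, VT i' | VT i, VC i' => i == i' | _, _ => false end.
Proof.
apply/existsP/idP => [[i]|].
  rewrite !vtx_eqE; case: x => [j b|i0|i0|i0| | | | ]; case: y => [j' b'|i1|i1|i1| | | | ] //=;
    rewrite ?andbF ?orbF //=; by case/andP => /eqP-> /eqP->.
case: x => [j b|i|i|i| | | | ]; case: y => [j' b'|i'|i'|i'| | | | ] //= /eqP<-;
  by exists i; rewrite !vtx_eqE /= eqxx ?orbT.
Qed.

Lemma Tedge_parent x y :
  Tedge cl x y = ((x != VR) && (y == parent x)) || ((y != VR) && (x == parent y)).
Proof.
rewrite /Tedge clause_edgeE !vtx_eqE.
by case: x => [j b|i|i|i| | | | ]; case: y => [j' b'|i'|i'|i'| | | | ]; rewrite /Gadj /= ?orbF ?andbF //= eq_sym.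
Qed.

Lemma order_is_Ftree : is_Ftree adj order (Tedge cl).
Proof.
move=> x y; rewrite Tedge_parent (ftree_edge_parent (parent := parent)) ?index_order ?lt0n ?pos_eq0 //.
- exact: mem_order.
- by move=> z; rewrite index_order lt0n pos_eq0; exact: parent_adj.
- by move=> z w _; rewrite !index_order; exact: parent_first.
Qed.
End Construction.

Unset Implicit Arguments.

Theorem lemma6 (k l : nat) (cl : 'I_l -> 'I_3 -> lit k) :
  satisfiable cl ->
  exists s : seq (vtx k l),
    is_LBFS (Gadj cl) s /\ is_Ftree (Gadj cl) s (Tedge cl).
Proof.
case=> a a_sat; exists (order cl a).
by split; [exact: order_is_LBFS | exact: order_is_Ftree].
Qed.
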